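(* Let $\Gamma$ be a labeled oriented tree of Coxeter type with vertex set $\mathbf{x}$, and let $e=(x\xrightarrow{w}y)$ be an edge of $\Gamma$, with relator $r_e=xw(wy)^{-1}$. Then, in the group $\langle \mathbf{x}\mid x^2,\ x\in\mathbf{x}\rangle$, the relator $r_e$ reduces, up to cyclic permutation, to $\bar r_e=(yx)^{m_e}$ for some odd integer $m_e\ge 1$.
   Context: A labeled oriented tree (LOT) $\Gamma$ is a finite tree with vertex set $\mathbf{x}$ whose edges are oriented and each edge is labeled by a (possibly empty) word $w$ in the letters $\mathbf{x}^{\pm1}$; $e=(x\xrightarrow{w}y)$ denotes the edge from $x$ to $y$ labeled $w$. Its presentation is $P(\Gamma)=\langle \mathbf{x}\mid r_e,\ e \text{ an edge}\rangle$ with $r_e=xw(wy)^{-1}$. $\Gamma$ is of Coxeter type if for every edge $e=(x\xrightarrow{w}y)$, every letter $z\neq x,y$ occurs in $w$ only with even (positive or negative) exponent, i.e. only in syllables $z^p$ with $p$ even. *)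

From mathcomp Require Import all_boot all_order all_algebra.
Set Implicit Arguments. Unset Strict Implicit. Unset Printing Implicit Defensive.
Import GRing.Theory Num.Theory.

Section LOT.
Variable V : finType.

(* A word in the letters V^{+-1}: a letter together with its sign
   (true = exponent +1, false = exponent -1). *)
Definition word := seq (V * bool).

Definition winv (w : word) : word := rev (map (fun p => (p.1, ~~ p.2)) w).

Definition edge := (V * V * word)%type.
Definition esrc (e : edge) : V := e.1.1.
Definition etgt (e : edge) : V := e.1.2.
Definition elab (e : edge) : word := e.2.

Definition relator (e : edge) : word :=
  [:: (esrc e, true)] ++ elab e ++ winv (elab e ++ [:: (etgt e, true)]).

Definition adj (E : seq edge) : rel V :=
  fun u v => has (fun e => ((esrc e == u) && (etgt e == v))
                        || ((esrc e == v) && (etgt e == u))) E.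

Definition is_tree (E : seq edge) : Prop :=
  0 < #|V| /\ size E = #|V| - 1 /\ (forall u v, connect (adj E) u v).

(* Syllable decomposition of a word: maximal blocks z^{e1} ... z^{ek} of a
   single letter z, recorded as (z, e1 + ... + ek). *)
Fixpoint syllables (w : word) : seq (V * int) :=
  match w with
  | [::] => [::]
  | (a, s) :: w' =>
      let sg : int := if s then 1%R else (-1)%R in
      match syllables w' with
      | (b, p) :: t => if a == b then (b, (sg + p)%R) :: t
                       else (a, sg) :: (b, p) :: t
      | [::] => [:: (a, sg)]
      end
  end.

Definition coxeter_type (E : seq edge) : Prop :=
  forall e, e \in E -> forall z (p : int), (z, p) \in syllables (elab e) ->
    z != esrc e -> z != etgt e -> (2 %| p)%Z.

(* Normal form in the group < V | x^2, x in V > (free product of copies of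
   Z/2): x^{-1} = x, so signs are forgotten; then adjacent equal letters are
   cancelled.  The result is the unique word with no two adjacent equal
   letters representing the same group element. *)
Definition cox_cancel (a : V) (s : seq V) : seq V :=
  match s with
  | b :: s' => if a == b then s' else a :: s
  | [::] => [:: a]
  end.
Definition cox_reduce (w : word) : seq V := foldr cox_cancel [::] (map fst w).

End LOT.

From mathcomp Require Import all_boot all_order all_algebra.
From mathcomp Require Import zify.

(* In the group W = < V | z^2 > signs of exponents are irrelevant, so r_e maps to
   x w y w^rev.  Dropping the even syllables of w and shortening the odd ones to a
   single letter does not change its image in W, and for a Coxeter-type edge what
   remains is a word v in x and y only; hence r_e reduces to an element of the
   infinite dihedral group <x, y>, i.e. to an alternating word in x and y.  The
   parity of the length and of the number of x's are invariants of reduction: the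
   reduced word has even length 2m and contains m letters x, and x occurs an odd
   number of times in x v y v^rev, so m is odd.  That x != y is where the tree
   hypothesis enters: a connected graph on n vertices has at least n - 1 edges
   that are not loops. *)

Set Implicit Arguments.
Unset Strict Implicit.
Unset Printing Implicit Defensive.

Section UniversalCoxeterWords.
Variable V : finType.
Implicit Types (a b x y : V) (s t u r : seq V).

Definition cox_reduced : seq V -> bool := sorted (fun a b => a != b).

(* [cox_act s u] is the normal form of s u when u is in normal form. *)
Definition cox_act s u := foldr (@cox_cancel V) u s.

Lemma cox_reduced_cancel a u : cox_reduced u -> cox_reduced (cox_cancel a u).
Proof.
case: u => [|b u] //=; case: eqP => [_|/eqP neq_ab] /=; last by move->; rewrite neq_ab.
by case: u => [|c u] //= /andP[].
Qed.

Lemma cox_cancelK a u : cox_reduced u -> cox_cancel a (cox_cancel a u) = u.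
Proof.
case: u => [|b u] /=; first by rewrite eqxx.
case: (a =P b) => [<-|neq_ab _] /=; last by rewrite eqxx; case: (a =P b).
by case: u => [|c u] //= /andP[/negbTE ->].
Qed.

Lemma cox_reduced_act s u : cox_reduced u -> cox_reduced (cox_act s u).
Proof. by elim: s => //= a s IHs /IHs; apply: cox_reduced_cancel. Qed.

Lemma cox_act_cat s t u : cox_act (s ++ t) u = cox_act s (cox_act t u).
Proof. exact: foldr_cat. Qed.

Lemma cox_act_revK s u : cox_reduced u -> cox_act (rev s) (cox_act s u) = u.
Proof.
elim: s u => //= a s IHs u red_u.
by rewrite rev_cons -cats1 cox_act_cat /= cox_cancelK ?IHs ?cox_reduced_act.
Qed.

Definition cox_equiv s t := forall u, cox_reduced u -> cox_act s u = cox_act t u.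

Lemma cox_equiv_trans t s r : cox_equiv s t -> cox_equiv t r -> cox_equiv s r.
Proof. by move=> eq_st eq_tr u red_u; rewrite eq_st // eq_tr. Qed.

Lemma cox_equiv_cat s1 s2 t1 t2 :
  cox_equiv s1 t1 -> cox_equiv s2 t2 -> cox_equiv (s1 ++ s2) (t1 ++ t2).
Proof.
by move=> eq1 eq2 u red_u; rewrite !cox_act_cat eq2 // eq1 ?cox_reduced_act.
Qed.

Lemma cox_equiv_cons a s t : cox_equiv s t -> cox_equiv (a :: s) (a :: t).
Proof. exact: (@cox_equiv_cat [:: a] _ [:: a]). Qed.

Lemma cox_equiv_sqr a : cox_equiv [:: a; a] [::].
Proof. exact: cox_cancelK. Qed.

Lemma cox_equiv_rev s t : cox_equiv s t -> cox_equiv (rev s) (rev t).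
Proof.
move=> eq_st u red_u; have red_tu := cox_reduced_act (rev t) red_u.
by rewrite -{1}(cox_act_revK (rev t) red_u) revK -eq_st // cox_act_revK.
Qed.

Lemma odd_size_cox_act s u : odd (size (cox_act s u)) = odd (size s) (+) odd (size u).
Proof.
elim: s => //= a s; rewrite addNb => <-; case: (cox_act s u) => [|b r] //=.
by case: eqP => //= _; rewrite negbK.
Qed.

Lemma odd_count_cox_act x s u :
  odd (count_mem x (cox_act s u)) = odd (count_mem x s) (+) odd (count_mem x u).
Proof.
elim: s => //= a s IHs; rewrite oddD -addbA -IHs.
case: (cox_act s u) => [|b r] /=; first by rewrite addn0 addbF.
by case: (a =P b) => [<-|_] /=; rewrite ?oddD ?addKb.
Qed.

Lemma all_cox_act (P : pred V) s u : all P s -> all P u -> all P (cox_act s u).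
Proof.
elim: s => //= a s IHs /andP[Pa Ps] /(IHs Ps).
case: (cox_act s u) => [|b r] /=; first by rewrite Pa.
by case: eqP => _ /=; [case/andP | rewrite Pa => ->].
Qed.

End UniversalCoxeterWords.

Section OddSyllables.
Variable V : finType.

(* In < V | z^2 > a syllable z^p is z if p is odd and 1 if p is even. *)
Definition odd_syllables (S : seq (V * int)) : seq V :=
  flatten [seq nseq (~~ (2 %| zp.2)%Z) zp.1 | zp <- S].

Lemma dvdz2_addpm1 (s : bool) (p : int) :
  (2 %| ((if s then 1 else -1) + p)%R)%Z = ~~ (2 %| p)%Z.
Proof. by case: s; lia. Qed.

Lemma odd_syllables_pm1 (s : bool) z S :
  odd_syllables ((z, if s then 1 else -1)%R :: S) = z :: odd_syllables S.
Proof. by case: s. Qed.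

Lemma cox_equiv_odd_syllables (w : word V) :
  cox_equiv (map fst w) (odd_syllables (syllables w)).
Proof.
elim: w => [|[a s] w IHw] //=.
case: (syllables w) IHw => [|[b p] S] IHw.
  by rewrite odd_syllables_pm1; apply: cox_equiv_cons.
case: (a =P b) => [<- {b} | _] in IHw *; last first.
  by rewrite odd_syllables_pm1; apply: cox_equiv_cons.
rewrite /odd_syllables /= dvdz2_addpm1 -/(odd_syllables S) in IHw *.
case: (2 %| p)%Z IHw => /= IHw; first exact: cox_equiv_cons.
apply: cox_equiv_trans (cox_equiv_cons a IHw) _.
exact: (@cox_equiv_cat _ [:: a; a] _ [::] _ (cox_equiv_sqr a) (fun _ _ => erefl)).
Qed.

Lemma all_odd_syllables (P : pred V) (S : seq (V * int)) :
  (forall z p, (z, p) \in S -> ~~ (2 %| p)%Z -> P z) -> all P (odd_syllables S).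
Proof.
elim: S => [|[z p] S IHS] //= P_S; rewrite all_cat IHS => [|y q yq]; last first.
  by apply: P_S; rewrite inE yq orbT.
by case: (boolP (2 %| p)%Z) => //= /(P_S z p (mem_head _ _)) ->.
Qed.

End OddSyllables.

Lemma count_flatten_nseq (T : eqType) (z : T) m s :
  count_mem z (flatten (nseq m s)) = m * count_mem z s.
Proof. by elim: m => //= m IHm; rewrite count_cat IHm mulSn. Qed.

Lemma rot1_flatten_nseq2 (T : Type) (x y : T) m :
  rot 1 (flatten (nseq m [:: y; x])) = flatten (nseq m [:: x; y]).
Proof. by case: m => //= m; rewrite rot1_cons; elim: m => //= m ->. Qed.

Section InfiniteDihedral.
Variable V : finType.
Implicit Types (x y : V) (r : seq V).

Lemma cox_reduced2_alternating x y m r :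
  cox_reduced (x :: r) -> all (mem [:: x; y]) r -> size r = m.*2.+1 ->
  x :: r = flatten (nseq m.+1 [:: x; y]).
Proof.
have other (u v z : V) : u != z -> z \in [:: u; v] -> z = v.
  by rewrite !inE eq_sym => /negbTE-> /eqP.
elim: m r => [|m IHm] [|z r] //= /andP[neq_xz red_zr] /andP[z_xy r_xy] [size_r];
  rewrite (other _ _ _ neq_xz z_xy) {z neq_xz z_xy} in red_zr *.
  by case: r size_r {red_zr r_xy}.
case: r size_r red_zr r_xy => [|z' r] //= [size_r].
move=> /andP[neq_yz' red_z'r] /andP[z'_xy r_xy].
have {neq_yz'}z'_x : z' = x by apply: other neq_yz' _; move: z'_xy; rewrite !inE orbC.
by rewrite z'_x in red_z'r *; rewrite (IHm r).
Qed.

Lemma cox_reduced2_rot_odd_power x y r :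
  x != y -> cox_reduced r -> all (mem [:: x; y]) r ->
  ~~ odd (size r) -> odd (count_mem x r) ->
  exists m, [/\ odd m, 0 < m & exists k, r = rot k (flatten (nseq m [:: y; x]))].
Proof.
move=> neq_xy; case: r => [|c r] // red_r /andP[c_xy r_xy] even_r.
have size_r : size r = ((size r)./2).*2.+1.
  by rewrite -[LHS]odd_double_half; move: even_r => /= /negbNE ->.
have count_x (u v : V) : count_mem x (flatten (nseq (size r)./2.+1 [:: u; v])) =
                         (size r)./2.+1 * ((u == x) + (v == x)).
  by rewrite count_flatten_nseq /= addn0.
move: c_xy red_r; rewrite !inE => /orP[]/eqP-> red_r.
- rewrite (cox_reduced2_alternating red_r r_xy size_r) count_x eqxx eq_sym.
  rewrite (negbTE neq_xy) muln1 => odd_m.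
  by exists (size r)./2.+1; split => //; exists 1; rewrite rot1_flatten_nseq2.
- have r_yx : all (mem [:: y; x]) r by apply: sub_all r_xy => z; rewrite !inE orbC.
  rewrite (cox_reduced2_alternating red_r r_yx size_r) count_x eqxx eq_sym.
  rewrite (negbTE neq_xy) addn1 muln1 => odd_m.
  by exists (size r)./2.+1; split => //; exists 0; rewrite rot0.
Qed.

End InfiniteDihedral.

Lemma closureS (T : finType) (r : rel T) (A B : {pred T}) :
  A \subset B -> closure r A \subset closure r B.
Proof. by move=> sAB; apply/subsetP => x; apply: contra; apply: disjointWr. Qed.

Section TreeEdges.
Variable V : finType.
Implicit Types (E : seq (edge V)) (e : edge V) (S T : {set V}).

Definition nonloop e := esrc e != etgt e.

Lemma adj_sym E : symmetric (adj E).
Proof. by move=> u v; apply: eq_has => e; apply: orbC. Qed.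

Lemma closure_adj_cons e E S T :
  S \subset T ->
  (esrc e \in closure (adj E) T) = (etgt e \in closure (adj E) T) ->
  closure (adj (e :: E)) S \subset closure (adj E) T.
Proof.
move=> sST eq_ab; apply/subsetP => x /pred0Pn[s /andP[/= x_s sS]].
have closedT : closed (adj (e :: E)) (closure (adj E) T).
  move=> u v /orP[/orP[]/andP[/eqP<- /eqP<-] | uv]; [exact: eq_ab | by rewrite eq_ab |].
  exact: closure_closed (sym_connect_sym (adj_sym E)) _ _ _ uv.
rewrite (closed_connect closedT x_s) (subsetP (closureS _ sST)) //.
exact: mem_closure.
Qed.

Lemma card_closure_adj E S : #|closure (adj E) S| <= count nonloop E + #|S|.
Proof.
elim: E S => [|e E IHE] S.
  apply: subset_leq_card; apply/subsetP => x /pred0Pn[s /andP[/= x_s sS]].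
  have closedS : closed (adj [::]) S by [].
  by rewrite (closed_connect closedS x_s).
have le_cl T : S \subset T ->
    (esrc e \in closure (adj E) T) = (etgt e \in closure (adj E) T) ->
    #|closure (adj (e :: E)) S| <= count nonloop E + #|T|.
  move=> sST eq_ab; apply: leq_trans (IHE T).
  exact: subset_leq_card (closure_adj_cons sST eq_ab).
have cardsU1S z : #|z |: S| <= #|S|.+1 by rewrite cardsU1; case: (z \in S).
have closureU1 z : z \in closure (adj E) (z |: S) by rewrite mem_closure ?setU11.
have closureSU1 z : closure (adj E) S \subset closure (adj E) (z |: S).
  by apply: closureS; apply: subsetU1.
rewrite /= -addnA.
case: (boolP (nonloop e)) => [_ | /negbNE/eqP eq_ab]; last first.
  by apply: le_cl; rewrite ?eq_ab.
rewrite add1n -addnS.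
case: (boolP (esrc e \in closure (adj E) S)) => [a_cl | a_ncl].
  apply: leq_trans (le_cl _ (subsetU1 (etgt e) S) _) _; last by rewrite leq_add2l cardsU1S.
  by rewrite closureU1 (subsetP (closureSU1 _)).
case: (boolP (etgt e \in closure (adj E) S)) => [b_cl | b_ncl].
  apply: leq_trans (le_cl _ (subsetU1 (esrc e) S) _) _; last by rewrite leq_add2l cardsU1S.
  by rewrite closureU1 (subsetP (closureSU1 _)).
apply: leq_trans (le_cl _ (subxx S) _) _; last by rewrite leq_add2l.
by rewrite (negbTE a_ncl) (negbTE b_ncl).
Qed.

Lemma tree_edge_nonloop E e : is_tree E -> e \in E -> esrc e != etgt e.
Proof.
case=> _ [size_E connected]; suff /allP : all nonloop E by apply.
have closure_full : closure (adj E) [set esrc e] =i predT.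
  by move=> x; apply/pred0Pn; exists (esrc e); rewrite !inE /= connected eqxx.
have le_V : #|V| <= count nonloop E + 1.
  by rewrite -(eq_card closure_full) -(cards1 (esrc e)) card_closure_adj.
rewrite all_count.
by apply/eqP; have := count_size nonloop E; lia.
Qed.

End TreeEdges.

Lemma map_fst_relator (V : finType) (e : edge V) :
  map fst (relator e) =
  esrc e :: map fst (elab e) ++ etgt e :: rev (map fst (elab e)).
Proof.
rewrite /relator /winv /= !map_cat map_rev map_cat cats1 rev_rcons -map_comp.
by congr (_ :: _ ++ _ :: rev _); apply: eq_map.
Qed.

Theorem lemma2p3 (V : finType) (E : seq (edge V)) (e : edge V) :
  is_tree E -> coxeter_type E -> e \in E ->
  exists m : nat, [/\ odd m, 0 < m &
    exists k : nat,
      cox_reduce (relator e) = rot k (flatten (nseq m [:: etgt e; esrc e]))].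
Proof.
move=> tree_E cox_E eE; have neq_xy := tree_edge_nonloop tree_E eE.
set x := esrc e in neq_xy *; set y := etgt e in neq_xy *.
set W := map fst (elab e); set v := odd_syllables (syllables (elab e)).
have v_xy : all (mem [:: x; y]) v.
  apply: all_odd_syllables => z p zp; rewrite !inE; apply: contraNT => /norP[z_x z_y].
  by rewrite (cox_E e eE z p zp z_x z_y).
have W_v : cox_equiv W v by apply: cox_equiv_odd_syllables.
have -> : cox_reduce (relator e) = cox_act (x :: v ++ y :: rev v) [::].
  rewrite /cox_reduce map_fst_relator -/W; apply: cox_equiv_cons => //.
  by apply: cox_equiv_cat W_v (cox_equiv_cons _ (cox_equiv_rev W_v)).
apply: cox_reduced2_rot_odd_power => //.
- exact: cox_reduced_act.
- by rewrite all_cox_act //= all_cat v_xy /= all_rev v_xy !inE !eqxx orbT.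
- by rewrite odd_size_cox_act /= size_cat /= size_rev addnS addnn /= odd_double.
- rewrite odd_count_cox_act /= count_cat /= count_rev eqxx eq_sym (negbTE neq_xy).
  by rewrite add0n addnn addbF /= odd_double.
Qed.
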